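(* Let $k \geq 2$ be an integer. Suppose that, for each $k$-admissible integer $n \geq 2k$, every non-reducible partial $k$-star design of order $n$ with at most $u(n,k)$ stars is completable. Then, for each $k$-admissible integer $n \geq 2k$, every partial $k$-star design of order $n$ with at most $u(n,k)$ stars is completable.
   Context: A $k$-star is a copy of $K_{1,k}$; its vertex of degree $k$ is the centre and the others are leaves. A partial $k$-star design of order $n$ is a pair $(V,\mathcal{A})$ where $V$ is a set of $n$ vertices and $\mathcal{A}$ is a set of edge-disjoint $k$-stars that are subgraphs of the complete graph $K_V$; it is completable if there is a set $\mathcal{B}\supseteq\mathcal{A}$ of edge-disjoint $k$-stars in $K_V$ covering all edges of $K_V$. A positive integer $n$ is $k$-admissible if $\binom{n}{2}\equiv 0 \pmod{k}$. Here \[u(n,k)= \begin{cases} 2 \lfloor \frac{n-2}{k} \rfloor-1 & \text{if $n \not \equiv 1\pmod{k}$},\\ \frac{2(n-1)}{k} - 2 & \text{if $n \equiv 1\pmod{k}$.} \end{cases} \] A partial $k$-star design $(V,\mathcal{A})$ of order $n$ is reducible if $n \equiv 1 \pmod{k}$, $|\mathcal{A}|=u(n,k)$, and there is a vertex which is the centre of at least one star in $\mathcal{A}$ and is not a leaf of any star in $\mathcal{A}$; otherwise it is non-reducible. *)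

From mathcomp Require Import all_boot.
Set Implicit Arguments. Unset Strict Implicit. Unset Printing Implicit Defensive.

(* Vertex set V = 'I_n (any n-set is isomorphic to it).
   A k-star is given by its centre c and its leaf set L, with c \notin L and #|L| = k. *)
Definition star (n : nat) := ('I_n * {set 'I_n})%type.

Definition centre n (s : star n) : 'I_n := s.1.
Definition leaves n (s : star n) : {set 'I_n} := s.2.

Definition is_kstar (k n : nat) (s : star n) : bool :=
  (centre s \notin leaves s) && (#|leaves s| == k).

Definition star_edges n (s : star n) : {set {set 'I_n}} :=
  [set [set centre s; l] | l in leaves s].

Definition is_edge n (e : {set 'I_n}) : bool := #|e| == 2.

Definition edge_disjoint_kstars (k n : nat) (A : {set star n}) : Prop :=
  (forall s, s \in A -> is_kstar k s) /\
  (forall s t, s \in A -> t \in A -> s != t ->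
     [disjoint star_edges s & star_edges t]).

Definition partial_star_design (k n : nat) (A : {set star n}) : Prop :=
  edge_disjoint_kstars k A.

Definition completable (k n : nat) (A : {set star n}) : Prop :=
  exists B : {set star n}, [/\ A \subset B, edge_disjoint_kstars k B &
    forall e : {set 'I_n}, is_edge e -> exists2 s, s \in B & e \in star_edges s].

Definition admissible (k n : nat) : bool := k %| 'C(n, 2).

Definition u (n k : nat) : nat :=
  if n %% k != 1 %% k then (2 * ((n - 2) %/ k)) - 1
  else (2 * (n - 1)) %/ k - 2.

Definition reducible (k n : nat) (A : {set star n}) : Prop :=
  [/\ n = 1 %[mod k], #|A| = u n k &
      exists v : 'I_n, (exists2 s, s \in A & centre s = v) /\
                       (forall s, s \in A -> v \notin leaves s)].

From mathcomp Require Import all_boot zify.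
From Stdlib Require Import Classical_Prop.
Set Implicit Arguments. Unset Strict Implicit. Unset Printing Implicit Defensive.

(** A reducible design has order n = m + 1 with k | m and a vertex v that is a
   centre but no leaf.  Deleting v, the stars not centred at v form a design on
   m vertices with at most u(n,k) - 1 = u(m,k) stars, which is non-reducible
   because m is not 1 mod k; let B' be a completion of it.  The stars of the design
   centred at v have pairwise disjoint leaf sets, and since k | m the vertices
   other than v left uncovered by them split into k-sets, which become the
   leaf sets of further stars centred at v.  Together with B' these stars
   complete the design. *)

Lemma uniform_partition_extend (T : finType) (k : nat) (D C : {set T})
    (Q : {set {set T}}) :
    0 < k -> k %| #|D| -> partition Q C -> C \subset D ->
    {in Q, forall L : {set T}, #|L| = k} ->
  exists P : {set {set T}},
    [/\ Q \subset P, partition P D & {in P, forall L : {set T}, #|L| = k}].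
Proof.
move=> k_gt0 kD pQ CD Qk.
have /dvdnP [j] : k %| #|D :\: C|.
  by rewrite cardsDS // dvdn_sub // (card_uniform_partition Qk pQ) dvdn_mull.
elim: j Q C pQ CD Qk => [|j IHj] Q C pQ CD Qk cDC.
  exists Q; split=> //; suff -> : D = C by [].
  by apply/eqP; rewrite eqEsubset CD andbT -setD_eq0 -cards_eq0 cDC.
have [S] : exists S, S \in [set S : {set T} | S \subset D :\: C & #|S| == k].
  by apply/card_gt0P; rewrite cards_draws bin_gt0 cDC; lia.
rewrite inE => /andP [SDC /eqP cS]; have /subsetDP [SD SC] := SDC.
have S0 : S != set0 by rewrite -card_gt0 cS.
have [|||P [QSP pP Pk]] := IHj (S |: Q) (S :|: C) (partitionU1 pQ S0 SC).
- by rewrite subUset SD CD.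
- by move=> L /setU1P [->|/Qk].
- by rewrite setUC -setDDl cardsDS // cDC cS; lia.
by exists P; split=> //; apply: subset_trans QSP; apply: subsetUr.
Qed.

Lemma set2r_inj (T : finType) (c : T) : injective (fun l => [set c; l]).
Proof.
move=> l l' eq_cl; have /set2P [lc|//] : l \in [set c; l'] by rewrite -eq_cl set22.
have /set2P [l'c|->//] : l' \in [set c; l] by rewrite eq_cl set22.
by rewrite lc l'c.
Qed.

Lemma cards2_set2 (T : finType) (e : {set T}) x :
  #|e| = 2 -> x \in e -> exists2 y, y != x & e = [set x; y].
Proof.
move=> ce xe; have /cards1P [y exy] : #|e :\ x| == 1.
  by move: ce; rewrite (cardsD1 x) xe; lia.
have : y \in e :\ x by rewrite exy set11.
rewrite !inE => /andP [yx _]; exists y => //.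
by rewrite -[LHS](setD1K xe) exy.
Qed.

Section StarEdges.

Variables (k n : nat).
Implicit Types (A B : {set star n}) (s t : star n) (e : {set 'I_n}).

Lemma star_edgesP s e :
  reflect (exists2 l, l \in leaves s & e = [set centre s; l]) (e \in star_edges s).
Proof. exact: imsetP. Qed.

Lemma centre_in_star_edge s e : e \in star_edges s -> centre s \in e.
Proof. by case/star_edgesP=> l _ ->; apply: set21. Qed.

Lemma disjoint_star_edges_centre s t : centre s = centre t ->
  [disjoint star_edges s & star_edges t] = [disjoint leaves s & leaves t].
Proof. by move=> cst; rewrite /star_edges cst imset_disjoint //; apply: set2r_inj. Qed.

Lemma edge_disjoint_kstarsS A B :
  A \subset B -> edge_disjoint_kstars k B -> edge_disjoint_kstars k A.
Proof.
move=> /subsetP AB [Bk Bd]; split=> [s /AB /Bk //|s t /AB sB /AB tB].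
exact: Bd.
Qed.

Lemma edge_disjoint_kstarsU A B :
    edge_disjoint_kstars k A -> edge_disjoint_kstars k B ->
    (forall s t, s \in A -> t \in B -> [disjoint star_edges s & star_edges t]) ->
  edge_disjoint_kstars k (A :|: B).
Proof.
move=> [Ak Ad] [Bk Bd] ABd; split=> [s /setUP [/Ak|/Bk] //|s t].
case/setUP=> [sA|sB] /setUP [tA|tB]; first exact: Ad; last exact: Bd.
- by move=> _; apply: ABd.
- by move=> _; rewrite disjoint_sym; apply: ABd.
Qed.

Lemma fan_completion (v : 'I_n) A :
    0 < k -> k %| n.-1 -> edge_disjoint_kstars k A -> {in A, forall s, centre s = v} ->
  exists C : {set star n}, [/\ A \subset C, edge_disjoint_kstars k C,
    {in C, forall s, centre s = v} &
    forall w, w != v -> exists2 s, s \in C & w \in leaves s].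
Proof.
move=> k_gt0 kn [Ak Ad] Av.
have sub_setC1 (L : {set 'I_n}) : (L \subset [set~ v]) = (v \notin L).
  by rewrite -disjoints_subset disjoint_sym disjoints1.
set Q := @leaves n @: A.
have Qk : {in Q, forall L : {set 'I_n}, #|L| = k}.
  by move=> _ /imsetP [s /Ak /andP [_ /eqP ck] ->].
have pQ : partition Q (cover Q).
  apply/and3P; split=> //.
    apply/trivIsetP=> _ _ /imsetP [s sA ->] /imsetP [t tA ->] st.
    rewrite -disjoint_star_edges_centre ?Av //; apply: Ad => //.
    by apply: contraNneq st => ->.
  by apply/negP=> /Qk; rewrite cards0 => k0; rewrite -k0 in k_gt0.
have QvD : cover Q \subset [set~ v].
  apply/bigcupsP=> _ /imsetP [s sA ->]; rewrite sub_setC1 -(Av s sA).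
  by case/andP: (Ak s sA).
have kv : k %| #|[set~ v]| by rewrite cardsC1 card_ord.
have [P [QP pP Pk]] := uniform_partition_extend k_gt0 kv pQ QvD Qk.
exists [set ((v, L) : star n) | L in P]; split.
- apply/subsetP=> -[c L] sA; rewrite -(Av _ sA); apply: imset_f.
  by apply: (subsetP QP); apply: imset_f sA.
- split=> [_ /imsetP [L LP ->]|_ _ /imsetP [L LP ->] /imsetP [L' L'P ->] LL'].
    by rewrite /is_kstar -sub_setC1 (partitionS pP) //= Pk.
  rewrite disjoint_star_edges_centre //.
  have /trivIsetP tP := partition_trivIset pP; apply: tP => //.
  by apply: contraNneq LL' => /= ->.
- by move=> _ /imsetP [L _ ->].
- move=> w wv; have : w \in cover P by rewrite (cover_partition pP) in_setC1.
  by case/bigcupP=> L LP wL; exists (v, L) => //; apply: imset_f.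
Qed.

End StarEdges.

Definition lift_star m (v : 'I_m.+1) (s : star m) : star m.+1 :=
  (lift v (centre s), lift v @: leaves s).

Section LiftStar.

Variables (k m : nat) (v : 'I_m.+1).

Lemma lift_preimsetK (X : {set 'I_m.+1}) : v \notin X -> lift v @: (lift v @^-1: X) = X.
Proof.
move=> vX; apply/setP=> x; case: (unliftP v x) => [y ->|->].
  by rewrite mem_imset ?inE //; apply: lift_inj.
rewrite (negbTE vX); apply/negbTE/imsetP=> -[y _ vy].
by move: (neq_lift v y); rewrite -vy eqxx.
Qed.

Lemma lift_star_inj : injective (lift_star v).
Proof.
move=> [c L] [c' L'] /eqP; rewrite xpair_eqE => /andP [/eqP eq_c /eqP eq_L].
by congr pair; [apply: lift_inj eq_c | apply: (imset_inj (@lift_inj _ v)) eq_L].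
Qed.

Lemma is_kstar_lift (s : star m) : is_kstar k (lift_star v s) = is_kstar k s.
Proof. by rewrite /is_kstar /= mem_imset ?card_imset //; apply: lift_inj. Qed.

Lemma star_edges_lift (s : star m) :
  star_edges (lift_star v s) = [set lift v @: e | e : {set 'I_m} in star_edges s].
Proof.
rewrite /star_edges /= -!imset_comp; apply: eq_imset => l /=.
by rewrite imsetU1 imset_set1.
Qed.

Lemma disjoint_star_edges_lift (s t : star m) :
  [disjoint star_edges (lift_star v s) & star_edges (lift_star v t)] =
  [disjoint star_edges s & star_edges t].
Proof. by rewrite !star_edges_lift imset_disjoint //; apply/imset_inj/lift_inj. Qed.

Lemma notin_lift_star_edge (s : star m) (e : {set 'I_m.+1}) :
  e \in star_edges (lift_star v s) -> v \notin e.
Proof.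
rewrite star_edges_lift => /imsetP [e' _ ->]; apply/imsetP=> -[x _ vx].
by move: (neq_lift v x); rewrite -vx eqxx.
Qed.

Lemma edge_disjoint_kstars_lift (B : {set star m}) :
  edge_disjoint_kstars k (lift_star v @: B) <-> edge_disjoint_kstars k B.
Proof.
split=> -[Bk Bd]; split.
- by move=> s sB; rewrite -is_kstar_lift; apply/Bk/imset_f.
- move=> s t sB tB st; rewrite -disjoint_star_edges_lift.
  by apply: Bd; rewrite ?imset_f ?(inj_eq lift_star_inj).
- by move=> _ /imsetP [s sB ->]; rewrite is_kstar_lift; apply: Bk.
- move=> _ _ /imsetP [s sB ->] /imsetP [t tB ->].
  by rewrite (inj_eq lift_star_inj) disjoint_star_edges_lift; apply: Bd.
Qed.

Lemma edge_disjoint_kstars_preimset (A : {set star m.+1}) :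
  edge_disjoint_kstars k A -> edge_disjoint_kstars k (lift_star v @^-1: A).
Proof.
move=> Ad; apply/edge_disjoint_kstars_lift; apply: edge_disjoint_kstarsS Ad.
by apply/subsetP=> _ /imsetP [s + ->]; rewrite inE.
Qed.

Lemma lift_starP (s : star m.+1) :
  centre s != v -> v \notin leaves s -> exists t, s = lift_star v t.
Proof.
case: s => c L /= cv vL; rewrite eq_sym in cv; have [c' -> _] := unlift_some cv.
by exists (c', lift v @^-1: L); rewrite /lift_star /= lift_preimsetK.
Qed.

Lemma card_preimset_lift_star_lt (A : {set star m.+1}) :
  (exists2 s, s \in A & centre s = v) -> #|lift_star v @^-1: A| < #|A|.
Proof.
case=> s sA sv; rewrite -(card_imset _ lift_star_inj); apply: proper_card.
apply/properP; split; first by apply/subsetP=> _ /imsetP [t + ->]; rewrite inE.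
exists s => //; apply/imsetP=> -[t _ st].
by move/eqP: sv; rewrite st eq_sym (negbTE (neq_lift _ _)).
Qed.

Lemma completable_lift (A : {set star m.+1}) :
    0 < k -> k %| m -> edge_disjoint_kstars k A -> {in A, forall s, v \notin leaves s} ->
  completable k (lift_star v @^-1: A) -> completable k A.
Proof.
move=> k_gt0 km Ad Avl [B' [A'B' B'd B'cov]].
set Av := [set s in A | centre s == v].
have [||C [AvC Cd Cv Ccov]] := @fan_completion k _ v Av k_gt0 km.
- by apply: edge_disjoint_kstarsS Ad; apply/subsetP=> s; rewrite inE => /andP [].
- by move=> s; rewrite inE => /andP [_ /eqP].
exists (lift_star v @: B' :|: C); split.
- apply/subsetP=> s sA; have [sv|sv] := eqVneq (centre s) v.
    by rewrite inE (subsetP AvC) ?orbT // inE sA sv eqxx.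
  have [t st] := lift_starP sv (Avl s sA).
  by rewrite inE st imset_f // (subsetP A'B') // inE -st.
- apply: edge_disjoint_kstarsU => //; first exact/edge_disjoint_kstars_lift.
  move=> _ s /imsetP [t _ ->] sC; rewrite disjoint_sym disjoints_subset.
  apply/subsetP=> e es; rewrite inE; apply/negP=> /notin_lift_star_edge.
  by rewrite -(Cv s sC) centre_in_star_edge.
- move=> e /eqP ce; have [ve|ve] := boolP (v \in e).
    have [w wv ->] := cards2_set2 ce ve; have [s sC ws] := Ccov w wv.
    by exists s; rewrite ?inE ?sC ?orbT //; apply/star_edgesP; exists w; rewrite ?Cv.
  have [|t tB' et] := B'cov (lift v @^-1: e).
    by rewrite /is_edge -(card_imset _ (@lift_inj _ v)) lift_preimsetK ?ce.
  exists (lift_star v t); first by rewrite inE imset_f.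
  by rewrite star_edges_lift -(lift_preimsetK ve) imset_f.
Qed.

End LiftStar.

Lemma admissibleS k m : k %| m -> admissible k m.+1 = admissible k m.
Proof. by move=> km; rewrite /admissible binS bin1 dvdn_addl. Qed.

Lemma u_mulS k j : 2 <= k -> 2 <= j -> u (j * k).+1 k = (u (j * k) k).+1.
Proof.
move=> k2 j2; rewrite /u -addn1 modnMDl modnMl modn_small // eqxx /=.
have -> : 2 * (j * k + 1 - 1) %/ k = 2 * j by rewrite addnK mulnA mulnK; lia.
have -> : j * k - 2 = (j - 1) * k + (k - 2) by rewrite mulnBl mul1n; nia.
rewrite divnMDl ?(divn_small (_ : k - 2 < k)); lia.
Qed.

Theorem lemma7 (k : nat) : 2 <= k ->
  (forall n : nat, admissible k n -> 2 * k <= n ->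
     forall A : {set star n}, partial_star_design k A -> ~ reducible k A ->
       #|A| <= u n k -> completable k A) ->
  forall n : nat, admissible k n -> 2 * k <= n ->
    forall A : {set star n}, partial_star_design k A ->
      #|A| <= u n k -> completable k A.
Proof.
move=> k2 H [|m] adm kn A pA hA; first by exfalso; lia.
have [[m1 _ [v [cv vleaves]]]|nred] := classic (reducible k A); last exact: H.
have km : k %| m by move/eqP: m1; rewrite eqn_mod_dvd // subn1.
have [j mj] := dvdnP km.
have j2 : 2 <= j by rewrite mj in kn; nia.
have um : u m.+1 k = (u m k).+1 by rewrite mj u_mulS.
have k_gt0 : 0 < k by lia.
apply: (completable_lift k_gt0 km pA vleaves); apply: H.
- by rewrite -admissibleS.
- by rewrite mj; nia.
- exact: edge_disjoint_kstars_preimset.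
- by case=> /eqP; rewrite {1}mj modnMl modn_small.
- by rewrite -ltnS -um; apply: leq_trans (card_preimset_lift_star_lt cv) hA.
Qed.
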